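(* Consider the Postdoc secretary problem with $n$ candidates in which, if the candidate accepted at the $k$-th interview is the overall second best candidate, the payoff is $1-k/n$, and otherwise (including accepting nobody) the payoff is $0$. Then there exist integers $0\le r(n)\le s(n)\le n$ such that the following strategy maximizes the expected payoff among all strategies: reject the first $r(n)$ interviewed candidates; for interviews $k$ with $r(n)<k\le s(n)$, accept the first candidate which is better than all the preceding ones; after the $s(n)$-th interview, accept the first candidate which is either the best or the second best among the candidates interviewed so far.
   Context: Setting (secretary-type problem): $n$ candidates have distinct qualities (a strict total order) and are interviewed one at a time in uniformly random order (all $n!$ orders equally likely). After the $k$-th interview, the interviewer knows only the relative ranks of the first $k$ candidates among themselves and must immediately and irrevocably either accept the $k$-th candidate (stopping the process) or reject it; rejected candidates cannot be recalled. A strategy is a rule making this decision at each step using only the relative ranks observed so far (it may accept nobody). *)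

From mathcomp Require Import all_boot all_order all_algebra all_fingroup.
Set Implicit Arguments. Unset Strict Implicit. Unset Printing Implicit Defensive.
Import Order.TTheory GRing.Theory Num.Theory.

(* An interview order is a permutation p : 'S_n ; p i is the overall rank
   (0 = best, 1 = second best, ...) of the candidate interviewed at
   (0-based) position i.  All n! orders are equally likely. *)

Definition relrank (n : nat) (p : 'S_n) (i : 'I_n) : nat :=
  #|[set j : 'I_n | (j < i)%N && (p j < p i)%N]|.

Definition hist (n : nat) (p : 'S_n) (k : nat) : seq nat :=
  [seq relrank p i | i <- [seq i : 'I_n <- enum 'I_n | (i < k)%N]].

(* A (deterministic) strategy: given the history of relative ranks after
   the k-th interview (a list of length k), decide whether to accept the
   k-th candidate.  The process stops at the first acceptance. *)
Definition strategy := seq nat -> bool.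

Definition payoff (n : nat) (S : strategy) (p : 'S_n) : rat :=
  match [pick i : 'I_n | S (hist p i.+1) &&
                         [forall j : 'I_n, (j < i)%N ==> ~~ S (hist p j.+1)]] with
  | Some i => if (p i == 1 :> nat) then 1 - (i.+1)%:R / n%:R else 0
  | None => 0
  end%R.

Definition expected_payoff (n : nat) (S : strategy) : rat :=
  ((\sum_(p : 'S_n) payoff S p) / (n`!)%:R)%R.

Definition threshold_strategy (r s : nat) : strategy :=
  fun h => let k := size h in let x := last 0%N h in
    ((r < k <= s)%N && (x == 0%N)) || ((s < k)%N && (x <= 1)%N).

From mathcomp Require Import all_boot all_order all_algebra all_fingroup.
From mathcomp Require Import zify ring lra.
Import Order.TTheory GRing.Theory Num.Theory.
Set Implicit Arguments. Unset Strict Implicit. Unset Printing Implicit Defensive.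

(* The history of relative ranks determines the interview order, and the
   histories of length k are exactly the sequences h with h_i <= i.  Summing
   over the n! orders is therefore summing over a tree of histories, so the
   expected payoff of every strategy is bounded by the Bellman value of that
   tree, with equality for a strategy that takes the better of stopping and
   continuing at every node.  The value of accepting the k-th candidate
   depends only on k and on its relative rank y, and vanishes unless y <= 1;
   after rescaling, the optimal value v_k after k interviews satisfies
     k v_(k-1) = max(a_k, v_k) + max(b_k, v_k) + (k-2) v_k,
   where a_k = 10k(n-k)^2 and b_k = 10k(k-1)(n-k) are the values of accepting
   a best and a second best so far.  The threshold strategy takes these
   decisions as soon as {k | v_k <= a_k} and {k | v_k <= b_k} are final
   segments of [1, n], the second one inside the first.  Up to about n/3
   (resp. 2n/3) a_k (resp. b_k) increases while v_k decreases; beyond, v_k is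
   dominated by the supersolution (n-k)^2 (n+5k), which lies below a_k
   (resp. b_k). *)

(* A later candidate of relative rank y beats a candidate of current relative
   rank x iff y <= x, which pushes the latter one place down. *)
Definition hist_rank (h : seq nat) (j : nat) : nat :=
  foldl (fun x y => x + (y <= x)) (nth 0 h j) (drop j.+1 h).

Lemma hist_rank_rcons h y j : j < size h ->
  hist_rank (rcons h y) j = hist_rank h j + (y <= hist_rank h j).
Proof. by move=> lt_jh; rewrite /hist_rank nth_rcons lt_jh drop_rcons // foldl_rcons. Qed.

Lemma hist_rank_last h y : hist_rank (rcons h y) (size h) = y.
Proof. by rewrite /hist_rank nth_rcons ltnn eqxx drop_oversize // size_rcons. Qed.

Fixpoint hists (k : nat) : seq (seq nat) :=
  if k is k'.+1 then [seq rcons h y | h <- hists k', y <- iota 0 k] else [:: [::]].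

Lemma size_mem_hists k h : h \in hists k -> size h = k.
Proof.
elim: k h => [|k IH] h; first by rewrite inE => /eqP ->.
by case/allpairsP=> -[h' y] /= [/IH size_h' _ ->]; rewrite size_rcons size_h'.
Qed.

Lemma rcons_mem_hists k h y : h \in hists k -> y <= k -> rcons h y \in hists k.+1.
Proof.
move=> hk le_yk; apply: (allpairs_f (fun h y => rcons h y)) => //.
by rewrite mem_iota ltnS.
Qed.

Lemma uniq_hists k : uniq (hists k).
Proof.
elim: k => [//|k IH]; apply: (@allpairs_uniq _ _ _ (fun h y => rcons h y)) => //.
  exact: iota_uniq.
by move=> [h1 y1] [h2 y2] _ _ /= /rcons_inj.
Qed.

Lemma size_hists k : size (hists k) = k`!.
Proof. by elim: k => [//|k IH]; rewrite size_allpairs IH size_iota factS mulnC. Qed.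

Section Histories.
Variable n : nat.
Implicit Types p q : 'S_n.

(* Both default to 0 outside [0, n). *)
Definition rrank p (i : nat) : nat :=
  if insub i is Some o then relrank p o else 0.
Definition orank p (i : nat) : nat :=
  if insub i is Some o then (p o : nat) else 0.

Lemma rrankE p (o : 'I_n) : rrank p o = relrank p o.
Proof. by rewrite /rrank valK. Qed.

Lemma orankE p (o : 'I_n) : orank p o = p o.
Proof. by rewrite /orank valK. Qed.

Lemma card_ord_lt m : m <= n -> #|[set o : 'I_n | o < m]| = m.
Proof.
move=> le_mn; have -> : [set o : 'I_n | o < m] = widen_ord le_mn @: [set: 'I_m].
  apply/setP => o; rewrite inE; apply/idP/imsetP => [lt_om|[j _ ->]].
    by exists (Ordinal lt_om) => //; apply: val_inj.
  exact: (ltn_ord j).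
rewrite card_imset ?cardsT ?card_ord //.
by move=> i j /(congr1 val) /= /val_inj.
Qed.

Lemma histE p k : k <= n -> hist p k = map (rrank p) (iota 0 k).
Proof.
move=> le_kn; rewrite /hist -(filter_iota_ltn 0 le_kn) -val_enum_ord filter_map.
by rewrite -map_comp; apply: eq_map => o; rewrite /= rrankE.
Qed.

Lemma hist0 p : hist p 0 = [::].
Proof. exact: histE. Qed.

Lemma histS p k : k < n -> hist p k.+1 = rcons (hist p k) (rrank p k).
Proof.
move=> lt_kn; rewrite (histE _ lt_kn) (histE _ (ltnW lt_kn)).
by rewrite -[k.+1]addn1 iotaD map_cat cats1.
Qed.

Lemma size_hist p k : k <= n -> size (hist p k) = k.
Proof. by move=> le_kn; rewrite histE // size_map size_iota. Qed.

Lemma relrank_le p (o : 'I_n) : relrank p o <= o.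
Proof.
rewrite /relrank -[X in _ <= X](card_ord_lt (ltnW (ltn_ord o))).
by apply/subset_leq_card/subsetP => j; rewrite !inE => /andP[].
Qed.

Lemma rrank_le p k : rrank p k <= k.
Proof. by rewrite /rrank; case: insubP => [o _ <-|]; first exact: relrank_le. Qed.

Definition nbelow p k v := #|[set l : 'I_n | (l < k) && (p l < v)]|.

Lemma relrank_nbelow p (o : 'I_n) : relrank p o = nbelow p o (p o).
Proof. by []. Qed.

Lemma nbelow_n p v : v <= n -> nbelow p n v = v.
Proof.
move=> le_vn; rewrite /nbelow -[RHS](card_ord_lt le_vn).
rewrite -[X in _ = X](card_preimset _ (@perm_inj _ p)).
by apply: eq_card => l; rewrite !inE ltn_ord.
Qed.

Lemma nbelowS p k v : k < n -> nbelow p k.+1 v = nbelow p k v + (orank p k < v).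
Proof.
move=> lt_kn; have -> : k = Ordinal lt_kn by [].
set o := Ordinal lt_kn; rewrite orankE /nbelow.
set A := [set l : 'I_n | (l < o) && (p l < v)].
have -> : [set l : 'I_n | (l < o.+1) && (p l < v)] = if p o < v then o |: A else A.
  apply/setP => l; rewrite !inE ltnS leq_eqVlt val_eqE.
  case: (eqVneq l o) => [->|ne_lo] /=; case: ifP; rewrite ?inE ?ltnn ?eqxx //.
  by rewrite (negbTE ne_lo).
by case: ifP; rewrite ?addn0 // cardsU1 inE ltnn add1n addn1.
Qed.

Lemma nbelow_mono p k v w : v <= w -> nbelow p k v <= nbelow p k w.
Proof.
move=> le_vw; apply/subset_leq_card/subsetP => l; rewrite !inE => /andP[-> /leq_trans].
exact.
Qed.

Lemma nbelow_lt p k (o : 'I_n) w : o < k -> p o < w -> nbelow p k (p o) < nbelow p k w.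
Proof.
move=> lt_ok lt_w; apply/proper_card/properP; split.
  apply/subsetP => l; rewrite !inE => /andP[-> /ltn_trans]; exact.
by exists o; rewrite !inE ?lt_ok ?lt_w ?ltnn ?andbF.
Qed.

Lemma orank_lt_rrank p j k : j < k < n ->
  (orank p k < orank p j) = (rrank p k <= nbelow p k (orank p j)).
Proof.
case/andP=> lt_jk lt_kn; have lt_jn := ltn_trans lt_jk lt_kn.
have -> : k = Ordinal lt_kn by []; have -> : j = Ordinal lt_jn by [].
rewrite !orankE rrankE relrank_nbelow.
case: ltngtP => [lt_kj|lt_jk'|/val_inj/perm_inj/(congr1 val)/= eq_kj].
- by rewrite nbelow_mono // ltnW.
- by rewrite leqNgt nbelow_lt.
- by rewrite eq_kj ltnn in lt_jk.
Qed.

Lemma hist_rank_hist p j k : j < k <= n ->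
  hist_rank (hist p k) j = nbelow p k (orank p j).
Proof.
elim: k => [|k IH] /andP[lt_jk lt_kn] //.
have size_k : size (hist p k) = k by rewrite size_hist // ltnW.
rewrite histS // nbelowS //; move: lt_jk; rewrite ltnS leq_eqVlt => /orP[/eqP ->|lt_jk].
  have := hist_rank_last (hist p k) (rrank p k); rewrite size_k => ->.
  by rewrite ltnn addn0; have -> : k = Ordinal lt_kn by []; rewrite rrankE orankE.
by rewrite hist_rank_rcons ?size_k // IH ?lt_jk ?(ltnW lt_kn) // orank_lt_rrank ?lt_jk.
Qed.

Lemma orank_hist_rank p j : j < n -> orank p j = hist_rank (hist p n) j.
Proof.
move=> lt_jn; have -> : j = Ordinal lt_jn by [].
by rewrite hist_rank_hist ?lt_jn ?leqnn // orankE nbelow_n // ltnW.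
Qed.

Lemma hist_inj p q : hist p n = hist q n -> p = q.
Proof.
move=> eq_pq; apply/permP => o; apply: val_inj.
by rewrite /= -!orankE !orank_hist_rank ?eq_pq.
Qed.

Lemma hist_mem_hists p k : k <= n -> hist p k \in hists k.
Proof.
elim: k => [|k IH] le_kn; first by rewrite hist0 inE.
by rewrite histS // rcons_mem_hists ?IH ?rrank_le // ltnW.
Qed.

Lemma hist_surj h : h \in hists n -> exists p : 'S_n, hist p n = h.
Proof.
move=> hn; set s := [seq hist p n | p <- enum 'S_n].
have uniq_s : uniq s by rewrite map_inj_uniq ?enum_uniq //; apply: hist_inj.
have sub_s : {subset s <= hists n} by move=> _ /mapP[p _ ->]; apply: hist_mem_hists.
have size_s : size (hists n) <= size s by rewrite size_map -cardE card_Sn size_hists.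
have [_ /(_ h)] := uniq_min_size uniq_s sub_s size_s.
by rewrite hn => /mapP[p _ ->]; exists p.
Qed.

End Histories.

Section UpwardClosed.
Variables (P : pred nat) (n : nat).
Hypothesis P_up : forall k, 0 < k < n -> P k -> P k.+1.

Lemma upward_closed_iter k m : 0 < k <= m -> m <= n -> P k -> P m.
Proof.
elim: m => [|m IH] /andP[k_gt0]; first by rewrite leqn0 => /eqP k0; rewrite k0 in k_gt0.
rewrite leq_eqVlt ltnS => /orP[/eqP <- //|le_km] lt_mn Pk.
apply: P_up; first by rewrite (leq_trans k_gt0 le_km).
by apply: IH (ltnW lt_mn) Pk; rewrite k_gt0.
Qed.

Lemma upward_closed_threshold :
  exists2 r, r <= n & forall k, 0 < k <= n -> P k = (r < k).
Proof.
have ex0 : exists i, (i <= n) && ((i == 0) || ~~ P i) by exists 0.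
have ub i : (i <= n) && ((i == 0) || ~~ P i) -> i <= n by case/andP.
case: (ex_maxnP ex0 ub) => r /andP[le_rn r_out] r_max.
exists r => // k /andP[k_gt0 le_kn]; case: (ltnP r k) => [lt_rk|le_kr].
  by apply: contraLR lt_rk => nPk; rewrite -leqNgt r_max // le_kn nPk orbT.
apply/negP => Pk; have r_gt0 := leq_trans k_gt0 le_kr.
move: r_out; rewrite -[r == 0]negbK -lt0n r_gt0 /=.
by rewrite (upward_closed_iter (k := k)) ?k_gt0.
Qed.

End UpwardClosed.

Local Open Scope ring_scope.

(* With d interviews left after the k-th, the number of continuations in which
   a candidate of current relative rank x ends up second best overall. *)
Fixpoint nsecond (d k x : nat) : rat :=
  if d is d'.+1 then \sum_(y < k.+1) nsecond d' k.+1 (x + (y <= x))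
  else (x == 1)%:R.

Section Payoff.
Variable n : nat.
Implicit Types (p : 'S_n) (S : strategy).

Lemma sum_hist_rcons (F : 'S_n -> rat) h k : (k < n)%N ->
  \sum_(p : 'S_n) (hist p k == h)%:R * F p =
  \sum_(y < k.+1) \sum_(p : 'S_n) (hist p k.+1 == rcons h y)%:R * F p.
Proof.
move=> lt_kn; rewrite exchange_big; apply: eq_bigr => p _ /=.
rewrite -big_distrl /= histS //; congr (_ * _).
have lt_rk : (rrank p k < k.+1)%N by rewrite ltnS rrank_le.
rewrite (bigD1 (Ordinal lt_rk)) //= eqseq_rcons eqxx andbT big1 ?addr0 // => y ne_y.
rewrite eqseq_rcons; case: (rrank p k =P y) => [eq_ry|_]; last by rewrite andbF.
by case/eqP: ne_y; apply: val_inj.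
Qed.

Lemma sum_hist_second d k h j : (k + d = n)%N -> h \in hists k -> (j < k)%N ->
  \sum_(p : 'S_n) ((hist p k == h) && (orank p j == 1%N))%:R =
  nsecond d k (hist_rank h j).
Proof.
elim: d k h => [|d IH] k h kd hk lt_jk.
  rewrite addn0 in kd; subst k; have [p0 <-] := hist_surj hk.
  rewrite (bigD1 p0) //= eqxx -orank_hist_rank // big1 ?addr0 // => p ne_p.
  by rewrite (inj_eq (@hist_inj n)) (negbTE ne_p).
have size_h := size_mem_hists hk.
under eq_bigr do rewrite -mulnb natrM.
rewrite sum_hist_rcons; last by rewrite -kd -addn1 leq_add2l.
apply: eq_bigr => y _; rewrite -/(nsecond d k.+1 _) -hist_rank_rcons ?size_h //.
rewrite -IH ?addSnnS //.
- by apply: eq_bigr => p _; rewrite -mulnb natrM.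
- by rewrite rcons_mem_hists // -ltnS.
- exact: ltn_trans lt_jk _.
Qed.

Definition reward p (m : nat) : rat := (orank p m == 1%N)%:R * (1 - m.+1%:R / n%:R).

Fixpoint payoff_from S p (d m : nat) : rat :=
  if d is d'.+1 then
    if S (hist p m.+1) then reward p m else payoff_from S p d' m.+1
  else 0.

Lemma payoff_from_accept S p d m i : (m <= i < m + d)%N -> S (hist p i.+1) ->
  (forall j, (m <= j < i)%N -> ~~ S (hist p j.+1)) -> payoff_from S p d m = reward p i.
Proof.
elim: d m => [|d IH] m /andP[le_mi lt_i] acc_i rej_before.
  by rewrite addn0 ltnNge le_mi in lt_i.
rewrite /=; case: ltngtP le_mi => // [lt_mi _|-> _]; last by rewrite acc_i.
rewrite (negbTE (rej_before m _)) ?leqnn //.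
apply: IH acc_i _ => [|j /andP[lt_mj lt_ji]]; first by rewrite lt_mi addSnnS.
by apply: rej_before; rewrite lt_ji (ltnW lt_mj).
Qed.

Lemma payoff_from_reject S p d m :
  (forall j, (m <= j < m + d)%N -> ~~ S (hist p j.+1)) -> payoff_from S p d m = 0.
Proof.
elim: d m => [//|d IH] m rej /=.
rewrite (negbTE (rej m _)); last by rewrite leqnn addnS ltnS leq_addr.
by apply: IH => j /andP[lt_mj lt_j]; apply: rej; rewrite (ltnW lt_mj) -addSnnS lt_j.
Qed.

Lemma payoffE S p : payoff S p = payoff_from S p n 0.
Proof.
rewrite /payoff; case: pickP => [i /andP[acc_i /forallP first_i]|none].
  rewrite (payoff_from_accept (i := i)) ?ltn_ord // => [|j /= lt_ji].
    by rewrite /reward orankE; case: eqP; rewrite ?mul1r ?mul0r.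
  by have /implyP := first_i (Ordinal (ltn_trans lt_ji (ltn_ord i))); apply.
rewrite payoff_from_reject // => j /andP[_ lt_jn]; apply/negP => acc_j.
have : exists j, (j < n)%N && S (hist p j.+1) by exists j; rewrite lt_jn.
case/ex_minnP=> i /andP[lt_in acc_i] min_i.
have /negP := none (Ordinal lt_in); rewrite /= acc_i; apply.
apply/forallP => l; apply/implyP => lt_li; apply/negP => acc_l.
by have := min_i l; rewrite ltn_ord acc_l leqNgt lt_li => /(_ isT).
Qed.

Definition stop_value (k y : nat) : rat := nsecond (n - k) k y * (1 - k%:R / n%:R).

Fixpoint strategy_value S (d : nat) (h : seq nat) : rat :=
  if d is d'.+1 then
    \sum_(y < (size h).+1)
      (if S (rcons h y) then stop_value (size h).+1 y
       else strategy_value S d' (rcons h y))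
  else 0.

Lemma sum_payoff_from S d m h : (m + d = n)%N -> h \in hists m ->
  \sum_(p : 'S_n) (hist p m == h)%:R * payoff_from S p d m = strategy_value S d h.
Proof.
elim: d m h => [|d IH] m h md hm; first by rewrite big1 // => p _; rewrite mulr0.
have lt_mn : (m < n)%N by rewrite -md addnS ltnS leq_addr.
have size_h := size_mem_hists hm.
rewrite sum_hist_rcons // /= size_h; apply: eq_bigr => y _.
have hm1 : rcons h y \in hists m.+1 by rewrite rcons_mem_hists // -ltnS.
rewrite (eq_bigr (fun p => (hist p m.+1 == rcons h y)%:R *
  (if S (rcons h y) then reward p m else payoff_from S p d m.+1))); last first.
  by move=> p _; case: eqP => [/= ->|]; rewrite ?mul0r.
case: (S (rcons h y)); last by apply: IH; rewrite // addSnnS.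
under eq_bigr do rewrite /reward mulrA -natrM mulnb.
rewrite -big_distrl /= (sum_hist_second (d := d)) ?addSnnS // /stop_value.
have -> : (n - m.+1)%N = d by rewrite -md addnS subSS addKn.
by have := hist_rank_last h y; rewrite size_h => ->.
Qed.

End Payoff.

Section Bellman.
Variable n : nat.
Implicit Type S : strategy.

Fixpoint opt_value (d m : nat) : rat :=
  if d is d'.+1 then
    \sum_(y < m.+1) Num.max (stop_value n m.+1 y) (opt_value d' m.+1)
  else 0.

Lemma opt_value_ge0 d m : 0 <= opt_value d m.
Proof.
elim: d m => [//|d IH] m /=; apply: sumr_ge0 => y _.
by rewrite le_max IH orbT.
Qed.

Lemma strategy_value_le_opt S d h : strategy_value n S d h <= opt_value d (size h).
Proof.
elim: d h => [//|d IH] h /=; apply: ler_sum => y _.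
case: (S (rcons h y)); first by rewrite le_max lexx.
by have := IH (rcons h y); rewrite size_rcons le_max => ->; rewrite orbT.
Qed.

Definition threshold_decision (r s k y : nat) : bool :=
  ((r < k <= s)%N && (y == 0%N)) || ((s < k)%N && (y <= 1)%N).

Lemma threshold_strategy_rcons r s h y :
  threshold_strategy r s (rcons h y) = threshold_decision r s (size h).+1 y.
Proof. by rewrite /threshold_strategy size_rcons last_rcons. Qed.

Definition bellman_threshold (r s : nat) := forall k y, (0 < k <= n)%N -> (y < k)%N ->
  if threshold_decision r s k y then opt_value (n - k) k <= stop_value n k y
  else stop_value n k y <= opt_value (n - k) k.

Lemma threshold_value r s d h : bellman_threshold r s -> (size h + d = n)%N ->
  strategy_value n (threshold_strategy r s) d h = opt_value d (size h).
Proof.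
move=> bellman; elim: d h => [//|d IH] h hd /=; apply: eq_bigr => y _.
have le_hn : ((size h).+1 <= n)%N by rewrite -hd addnS ltnS leq_addr.
have := bellman (size h).+1 y le_hn (ltn_ord y); rewrite threshold_strategy_rcons.
have -> : (n - (size h).+1)%N = d by rewrite -hd addnS subSS addKn.
case: threshold_decision => [/max_idPl|/max_idPr] -> //.
by rewrite IH ?size_rcons ?addSnnS.
Qed.

Lemma expected_payoffE S : expected_payoff n S = strategy_value n S n [::] / n`!%:R.
Proof.
rewrite /expected_payoff -(sum_payoff_from S (m := 0)) ?inE //.
by congr (_ / _); apply: eq_bigr => p _; rewrite hist0 eqxx mul1r payoffE.
Qed.

Lemma threshold_optimal r s S : bellman_threshold r s ->
  expected_payoff n S <= expected_payoff n (threshold_strategy r s).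
Proof.
move=> bellman; rewrite !expected_payoffE ler_wpM2r ?invr_ge0 ?ler0n //.
by rewrite threshold_value //; apply: strategy_value_le_opt.
Qed.

End Bellman.

Section TwoThresholds.
Variables (R : realFieldType) (n ka kb : nat) (a b U v : nat -> R).
Hypothesis v_rec : forall k, (1 < k <= n)%N ->
  k%:R * v k.-1 = Num.max (a k) (v k) + Num.max (b k) (v k) + (k - 2)%:R * v k.
Hypothesis U_super : forall k, (ka < k <= n)%N ->
  Num.max (a k) (U k) + Num.max (b k) (U k) + (k - 2)%:R * U k <= k%:R * U k.-1.
Hypothesis v_le_U_n : v n <= U n.
Hypothesis ka_gt0 : (0 < ka)%N.
Hypothesis ka_le_kb : (ka <= kb)%N.
Hypothesis a_incr : forall k, (0 < k < ka)%N -> a k <= a k.+1.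
Hypothesis b_incr : forall k, (0 < k < kb)%N -> b k <= b k.+1.
Hypothesis U_le_a : forall k, (ka <= k <= n)%N -> U k <= a k.
Hypothesis U_le_b : forall k, (kb <= k <= n)%N -> U k <= b k.
Hypothesis b_le_a : forall k, (0 < k < ka)%N -> b k <= a k.

Lemma value_le_super k : (ka <= k <= n)%N -> v k <= U k.
Proof.
move=> /andP[le_kak le_kn]; rewrite -(subKn le_kn).
have : (n - k <= n - ka)%N by rewrite leq_sub2l.
elim: (n - k)%N => [|i IH] le_i; first by rewrite subn0.
have lt_i : (ka < n - i <= n)%N by rewrite leq_subr andbT; lia.
have k_gt0 : (0 < (n - i)%:R :> R) by rewrite ltr0n; lia.
rewrite (_ : (n - i.+1 = (n - i).-1)%N); last by lia.
rewrite -(ler_pM2l k_gt0) v_rec; last by rewrite leq_subr andbT; lia.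
apply: le_trans (U_super lt_i); have le_vU := IH (ltnW le_i).
by rewrite !lerD ?le_max2 // ler_wpM2l.
Qed.

Lemma value_nonincr k : (1 < k <= n)%N -> v k <= v k.-1.
Proof.
move=> k_range; have k_gt0 : (0 < k%:R :> R) by rewrite ltr0n; lia.
rewrite -(ler_pM2l k_gt0) v_rec //.
have -> : k%:R = (k - 2)%:R + 2 :> R by rewrite -natrD subnK //; lia.
have le_va : v k <= Num.max (a k) (v k) by rewrite le_max lexx orbT.
have le_vb : v k <= Num.max (b k) (v k) by rewrite le_max lexx orbT.
lra.
Qed.

Lemma stop_region_up (c : nat -> R) K : (ka <= K)%N ->
  (forall k, (0 < k < K)%N -> c k <= c k.+1) ->
  (forall k, (K <= k <= n)%N -> U k <= c k) ->
  forall k, (0 < k < n)%N -> v k <= c k -> v k.+1 <= c k.+1.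
Proof.
move=> le_kaK c_incr U_le_c k /andP[k_gt0 lt_kn] le_vc; case: (ltnP k K) => [lt_kK|le_Kk].
  apply: le_trans (c_incr _ _); last by rewrite k_gt0.
  by apply: le_trans le_vc; apply: (value_nonincr (k := k.+1)); rewrite ltnS k_gt0.
apply: le_trans (U_le_c _ _); last by rewrite lt_kn (leq_trans le_Kk).
by apply: value_le_super; rewrite lt_kn andbT (leq_trans le_kaK (leqW le_Kk)).
Qed.

Lemma two_thresholds : exists r s, (r <= s <= n)%N /\ forall k, (0 < k <= n)%N ->
  (v k <= a k) = (r < k)%N /\ (v k <= b k) = (s < k)%N.
Proof.
have [r le_rn Er] := upward_closed_threshold (stop_region_up (leqnn ka) a_incr U_le_a).
have [s le_sn Es] := upward_closed_threshold (stop_region_up ka_le_kb b_incr U_le_b).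
exists r, s; split=> [|k k_range]; last by rewrite Er ?Es.
rewrite le_sn andbT leqNgt; apply/negP => lt_sr.
have r_range : (0 < r <= n)%N by rewrite le_rn (leq_ltn_trans _ lt_sr).
have := Er r r_range; rewrite ltnn => /negP; apply.
case: (ltnP r ka) => [lt_rka|le_kar].
  by apply: le_trans (b_le_a _); rewrite ?Es ?lt_sr // (leq_ltn_trans _ lt_sr).
by apply: le_trans (U_le_a _); rewrite ?value_le_super ?le_kar.
Qed.

End TwoThresholds.

Definition Ka (n : nat) : nat := n.+1 %/ 3.
Definition Kb (n : nat) : nat := (2 * n + 2) %/ 3.

Lemma Ka_gt0 n : (1 < n)%N -> (0 < Ka n)%N.
Proof. by rewrite /Ka; lia. Qed.

Lemma Ka_le_Kb n : (Ka n <= Kb n)%N.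
Proof. by rewrite /Ka /Kb; lia. Qed.

Section Polynomials.
Context {R : realFieldType} (n : nat).
Hypothesis n_gt1 : (1 < n)%N.
Local Notation N := (n%:R : R).

Definition best_reward (k : nat) : R := 10 * k%:R * (N - k%:R) ^+ 2.
Definition second_reward (k : nat) : R := 10 * k%:R * (k%:R - 1) * (N - k%:R).
Definition value_bound (k : nat) : R := (N - k%:R) ^+ 2 * (N + 5 * k%:R).

Lemma best_reward_incr k : (0 < k < Ka n)%N -> best_reward k <= best_reward k.+1.
Proof.
case/andP=> k_gt0 lt_kKa; have : (3 * k + 2 <= n)%N by rewrite /Ka in lt_kKa; lia.
rewrite -(ler_nat R) natrD natrM => le_3k2_N; move: k_gt0; rewrite -(ler_nat R) => k_ge1.
have : 0 <= (N - k%:R - 1 - (2 * k%:R + 1)) * (N - k%:R - 1) by apply: mulr_ge0; lra.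
rewrite /best_reward -addn1 natrD; nra.
Qed.

Lemma second_reward_incr k : (0 < k < Kb n)%N -> second_reward k <= second_reward k.+1.
Proof.
case/andP=> k_gt0 lt_kKb; have : (3 * k + 1 <= 2 * n)%N by rewrite /Kb in lt_kKb; lia.
rewrite -(ler_nat R) natrD !natrM => le_3k1_2N.
move: k_gt0; rewrite -(ler_nat R) => k_ge1.
have : 0 <= k%:R * (2 * N - 3 * k%:R - 1) by apply: mulr_ge0; lra.
rewrite /second_reward -addn1 natrD; nra.
Qed.

Lemma second_le_best k : (0 < k < Ka n)%N -> second_reward k <= best_reward k.
Proof.
case/andP=> k_gt0 lt_kKa; have : (3 * k + 2 <= n)%N by rewrite /Ka in lt_kKa; lia.
rewrite -(ler_nat R) natrD natrM => le_3k2_N; move: k_gt0; rewrite -(ler_nat R) => k_ge1.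
have : 0 <= 10 * k%:R * (N - k%:R) * (N - 2 * k%:R + 1).
  by apply: mulr_ge0; [apply: mulr_ge0|]; lra.
rewrite /best_reward /second_reward; nra.
Qed.

Lemma value_bound_le_best k : (Ka n <= k <= n)%N -> value_bound k <= best_reward k.
Proof.
case/andP=> le_Kak _; have : (n <= 5 * k)%N by rewrite /Ka in le_Kak; lia.
rewrite -(ler_nat R) natrM => le_N_5k.
have : 0 <= (N - k%:R) ^+ 2 * (5 * k%:R - N) by apply: mulr_ge0; [apply: sqr_ge0|lra].
rewrite /value_bound /best_reward; nra.
Qed.

Lemma value_bound_le_second k : (Kb n <= k <= n)%N -> value_bound k <= second_reward k.
Proof.
case/andP=> le_Kbk le_kn; rewrite /value_bound /second_reward.
have [->|ne_kn] := eqVneq k n; first by rewrite subrr expr0n /= !(mul0r, mulr0).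
have : (k + 1 <= n)%N by rewrite addn1 ltn_neqAle ne_kn.
have : (2 <= k)%N by rewrite /Kb in le_Kbk; lia.
have : (2 * n <= 3 * k)%N by rewrite /Kb in le_Kbk; lia.
rewrite -!(ler_nat R) !natrM natrD; set K := k%:R => le_2N_3K K_ge2 lt_KN.
have h1 : 0 <= (K - 2 * (N - K)) * (K + 2 * (N - K)) by apply: mulr_ge0; lra.
have h2 : 0 <= K * (K - 2 * (N - K)) by apply: mulr_ge0; lra.
have h3 : 0 <= K * (27 * K - 40) by apply: mulr_ge0; lra.
have h4 : 0 <= 10 * K * (K - 1) - (N - K) * (N + 5 * K) by nra.
have : 0 <= (N - K) * (10 * K * (K - 1) - (N - K) * (N + 5 * K)).
  by apply: mulr_ge0; lra.
nra.
Qed.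

Lemma value_bound_super k : (Ka n < k <= n)%N ->
  Num.max (best_reward k) (value_bound k) + Num.max (second_reward k) (value_bound k)
    + (k - 2)%:R * value_bound k <= k%:R * value_bound k.-1.
Proof.
case/andP=> lt_Kak le_kn.
have le_UA : value_bound k <= best_reward k by rewrite value_bound_le_best // le_kn ltnW.
have k_ge2 : (2 <= k)%N by rewrite /Ka in lt_Kak; lia.
rewrite (max_l le_UA); move: le_UA.
rewrite natrB // /value_bound /best_reward /second_reward.
rewrite -subn1 natrB ?(ltnW k_ge2) //.
have : (n + 2 <= 3 * k)%N by rewrite /Ka in lt_Kak; lia.
move: le_kn k_ge2; rewrite -!(ler_nat R) natrD (natrM R 3 k); set K := k%:R.
move=> le_KN K_ge2 le_N2_3K le_UA.
have h1 : 0 <= (3 * K - (N - K)) * (4 * K - (N - K)) - 9 * K.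
  have : 0 <= (3 * K - (N - K) - (K + 2)) * (4 * K - (N - K)) by apply: mulr_ge0; lra.
  have : 0 <= (K + 2) * (4 * K - (N - K) - (2 * K + 2)) by apply: mulr_ge0; lra.
  nra.
have h2 : 0 <= (N - K) * ((3 * K - (N - K)) * (4 * K - (N - K)) - 9 * K).
  by apply: mulr_ge0; lra.
have h3 : 0 <= K * (6 * K - 5) by apply: mulr_ge0; lra.
have h4 : 0 <= (N - K) * (2 * (N - K - K / 4) ^+ 2 + 15 / 8 * K ^+ 2).
  by apply: mulr_ge0; [lra | apply: addr_ge0; apply: mulr_ge0; rewrite ?sqr_ge0 //; lra].
have h5 : 0 <= K * (N - K) by apply: mulr_ge0; lra.
rewrite maxEle; case: ifP => _; nra.
Qed.

End Polynomials.

Section ClosedForms.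
Variable n : nat.
Hypothesis n_gt1 : (1 < n)%N.
Local Notation N := (n%:R : rat).

Definition nextend (k : nat) : rat := n`!%:R / k`!%:R.

Lemma nextend_gt0 k : 0 < nextend k.
Proof. by rewrite divr_gt0 // ltr0n fact_gt0. Qed.

Lemma nextendS k : nextend k = k.+1%:R * nextend k.+1.
Proof.
have fact_neq0 m : m`!%:R != 0 :> rat by rewrite pnatr_eq0 -lt0n fact_gt0.
by rewrite /nextend factS natrM; field; rewrite fact_neq0 nat1r pnatr_eq0.
Qed.

Lemma nsecond_gt1 d k x : (1 < x)%N -> nsecond d k x = 0.
Proof.
elim: d k x => [|d IH] k x lt1x /=; first by case: eqP lt1x => // ->.
by rewrite big1 // => y _; rewrite IH // (leq_trans lt1x) ?leq_addr.
Qed.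

Lemma nsecond_closed d k : (k + d = n)%N ->
  nsecond d k 0 = nextend k * (k%:R * (N - k%:R) / (N * (N - 1))) /\
  nsecond d k 1 = nextend k * (k%:R * (k%:R - 1) / (N * (N - 1))).
Proof.
have N_neq0 : N != 0 by rewrite pnatr_eq0 -lt0n ltnW.
have N1_neq0 : N - 1 != 0 by rewrite subr_eq0 pnatr_eq1 gtn_eqF.
elim: d k => [|d IH] k kd.
  rewrite addn0 in kd; subst k; rewrite /= /nextend subrr mulr0 mul0r mulr0.
  by rewrite divff ?pnatr_eq0 -?lt0n ?fact_gt0 // mul1r divff // mulf_neq0.
have [IH0 IH1] := IH k.+1 (etrans (addSnnS k d) kd).
split.
  rewrite /= big_ord_recl /= IH1.
  rewrite (eq_bigr (fun _ => nsecond d k.+1 0)) => [|i _]; last by rewrite /bump /= add0n.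
  rewrite sumr_const card_ord IH0 (nextendS k) -mulr_natl -addn1 natrD; field.
  by rewrite N_neq0 N1_neq0.
case: k kd IH0 IH1 => [|k] _ _ IH1.
  by rewrite /= big_ord1 nsecond_gt1 // !mul0r mulr0.
rewrite /= big_ord_recl big_ord_recl /= [nsecond d k.+2 2]nsecond_gt1 // !add0r.
rewrite (eq_bigr (fun _ => nsecond d k.+2 1)) => [|i _]; last by rewrite /bump /= !add1n.
rewrite sumr_const card_ord IH1 (nextendS k.+1) -mulr_natl.
rewrite -[k.+2]addn2 -[k.+1]addn1 !natrD; field.
by rewrite N_neq0 N1_neq0.
Qed.

(* The factor 10 keeps the coefficients of [value_bound] integral. *)
Definition scale (k : nat) : rat := 10 * N ^+ 2 * (N - 1) / nextend k.

Lemma scale_gt0 k : 0 < scale k.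
Proof.
have N_gt1 : 1 < N by rewrite ltr1n.
rewrite /scale.
by rewrite divr_gt0 ?nextend_gt0 // !mulr_gt0 //; lra.
Qed.

Lemma scaleS k : k.+1%:R * scale k = scale k.+1.
Proof.
by rewrite /scale (nextendS k); field; rewrite (gt_eqF (nextend_gt0 _)) nat1r pnatr_eq0.
Qed.

Lemma scale_stop_best k : (k <= n)%N -> scale k * stop_value n k 0 = best_reward n k.
Proof.
move=> le_kn; rewrite /stop_value; have [-> _] := nsecond_closed (subnKC le_kn).
have N_gt1 : 1 < N by rewrite ltr1n.
rewrite /scale /best_reward.
by field; rewrite (gt_eqF (nextend_gt0 k)) andbT; apply/andP; split; apply/eqP; lra.
Qed.

Lemma scale_stop_second k : (k <= n)%N -> scale k * stop_value n k 1 = second_reward n k.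
Proof.
move=> le_kn; rewrite /stop_value; have [_ ->] := nsecond_closed (subnKC le_kn).
have N_gt1 : 1 < N by rewrite ltr1n.
rewrite /scale /second_reward.
by field; rewrite (gt_eqF (nextend_gt0 k)) andbT; apply/andP; split; apply/eqP; lra.
Qed.

Lemma stop_value_gt1 k y : (1 < y)%N -> stop_value n k y = 0.
Proof. by move=> lt1y; rewrite /stop_value nsecond_gt1 ?mul0r. Qed.

Definition scaled_opt (k : nat) : rat := scale k * opt_value n (n - k) k.

Lemma scaled_opt_n : scaled_opt n = 0.
Proof. by rewrite /scaled_opt subnn mulr0. Qed.

Lemma scaled_opt_rec k : (1 < k <= n)%N ->
  k%:R * scaled_opt k.-1 = Num.max (best_reward n k) (scaled_opt k) +
    Num.max (second_reward n k) (scaled_opt k) + (k - 2)%:R * scaled_opt k.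
Proof.
case: k => [|[|k]] // /andP[_ le_kn]; rewrite /scaled_opt.
have -> : (n - k.+1 = (n - k.+2).+1)%N by rewrite subnSK.
rewrite /= big_ord_recl big_ord_recl /=.
rewrite (eq_bigr (fun _ => opt_value n (n - k.+2) k.+2)) => [|i _]; last first.
  by rewrite stop_value_gt1 // max_r // opt_value_ge0.
rewrite sumr_const card_ord -(scale_stop_best le_kn) -(scale_stop_second le_kn).
rewrite -!maxr_pMr ?(ltW (scale_gt0 _)) // subn2 /= mulrA scaleS -mulr_natr.
by rewrite /bump /=; ring.
Qed.

End ClosedForms.

Lemma le_total_if d (T : orderType d) (x z : T) (b : bool) :
  (z <= x)%O = b -> if b then (z <= x)%O else (x <= z)%O.
Proof. by case: b => // /negbT; rewrite -ltNge; apply: ltW. Qed.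

Lemma bellman_threshold_exists n :
  exists r s, (r <= s <= n)%N /\ bellman_threshold n r s.
Proof.
have [le_n1|n_gt1] := leqP n 1.
  exists 0%N, 0%N; split=> // k y k_range lt_yk.
  have [-> ->] : k = 1%N /\ n = 1%N by lia.
  have -> : y = 0%N by lia.
  by rewrite /threshold_decision /stop_value subnn [nsecond _ _ _]/= mul0r.
have v_le_U_n : scaled_opt n n <= value_bound n n.
  by rewrite scaled_opt_n /value_bound subrr expr0n mul0r.
have [r [s [rs thresholds]]] := two_thresholds (scaled_opt_rec n_gt1)
  (value_bound_super n_gt1) v_le_U_n (Ka_gt0 n_gt1)
  (Ka_le_Kb n) (best_reward_incr n_gt1) (second_reward_incr n_gt1)
  (value_bound_le_best n_gt1) (value_bound_le_second n_gt1) (second_le_best n_gt1).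
exists r, s; split=> [//|k y k_range lt_yk].
have [best_r second_s] := thresholds k k_range.
have le_kn : (k <= n)%N by case/andP: k_range.
have scale_le x z : (scale n k * z <= scale n k * x) = (z <= x).
  by rewrite ler_pM2l // scale_gt0.
case: y lt_yk => [|[|y]] lt_yk.
- have -> : threshold_decision r s k 0 = (r < k)%N by rewrite /threshold_decision; lia.
  by apply: le_total_if; rewrite -scale_le scale_stop_best.
- have -> : threshold_decision r s k 1 = (s < k)%N by rewrite /threshold_decision; lia.
  by apply: le_total_if; rewrite -scale_le scale_stop_second.
- have -> : threshold_decision r s k y.+2 = false by rewrite /threshold_decision; lia.
  by rewrite stop_value_gt1 // opt_value_ge0.
Qed.

Theorem theorem8 (n : nat) :
  exists r s : nat, (r <= s <= n)%N /\
    forall S : strategy,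
      (expected_payoff n S <= expected_payoff n (threshold_strategy r s))%R.
Proof.
have [r [s [rs bellman]]] := bellman_threshold_exists n.
by exists r, s; split=> // S; apply: threshold_optimal.
Qed.
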